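(* Let $m\ge 1$, $N=2^m$, let $\mathcal{A}\subseteq[0,N-1]$ with complement $\mathcal{A}^c=[0,N-1]\setminus\mathcal{A}$, and let $\mathbf{P}\in\mathbb{F}_2^{N\times N}$ be upper triangular with all diagonal entries equal to $1$. Then $$\mathcal{C}_{\mathbf{P}\boldsymbol{G}_N}(\mathcal{A})^{\perp}=\mathcal{C}_{(\mathbf{P}^{t})^{-1}\mathbf{Q}_{\pi}\boldsymbol{G}_N\mathbf{Q}_{\pi}}(\mathcal{A}^c).$$
   Context: $[\ell,u]=\{\ell,\dots,u\}$. $\boldsymbol{G}_N=\begin{pmatrix}1&0\\1&1\end{pmatrix}^{\otimes m}$ over $\mathbb{F}_2$, rows and columns indexed by $0,\dots,N-1$. For $\mathbf{B}\in\mathbb{F}_2^{N\times N}$ and $\mathcal{S}\subseteq[0,N-1]$, $\mathcal{C}_{\mathbf{B}}(\mathcal{S})$ is the binary linear code spanned by the rows of $\mathbf{B}$ indexed by $\mathcal{S}$. $\mathbf{Q}_{\pi}$ is the permutation matrix of the permutation of $[0,N-1]$ swapping $i$ and $N-1-i$. $\perp$ denotes the dual code for the standard inner product over $\mathbb{F}_2$. *)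

From mathcomp Require Import all_boot all_order all_algebra all_fingroup.
Set Implicit Arguments. Unset Strict Implicit. Unset Printing Implicit Defensive.
Import GRing.Theory.
Local Open Scope ring_scope.

(* The 2x2 kernel F = [[1,0],[1,1]] over F_2, indexed by bits. *)
Definition polar_kernel : 'M['F_2]_2 :=
  \matrix_(a < 2, b < 2) (if (a == 0 :> nat) && (b == 1 :> nat) then 0 else 1).

Definition bit (k i : nat) : 'I_2 := inord (odd (i %/ 2 ^ k)).

(* G_N = F^{(x) m}, N = 2^m: entrywise, the Kronecker power is the product
   over all m binary digits of the kernel entries. *)
Definition GN (m : nat) : 'M['F_2]_(2 ^ m) :=
  \matrix_(i, j) \prod_(k < m) polar_kernel (bit k i) (bit k j).

Definition Qpi (n : nat) : 'M['F_2]_n := perm_mx (perm (@rev_ord_inj n)).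

(* C_B(S): the binary linear code spanned by the rows of B indexed by S,
   represented by a matrix whose row space is that code. *)
Definition code_gen (n : nat) (B : 'M['F_2]_n) (S : {set 'I_n}) : 'M['F_2]_n :=
  \matrix_(i, j) (if i \in S then B i j else 0).

Definition in_code (n : nat) (B : 'M['F_2]_n) (S : {set 'I_n}) (v : 'rV['F_2]_n) : bool :=
  (v <= code_gen B S)%MS.

Definition in_dual_code (n : nat) (B : 'M['F_2]_n) (S : {set 'I_n}) (v : 'rV['F_2]_n) : Prop :=
  forall c : 'rV['F_2]_n, in_code B S c -> (c *m v^T) 0 0 = 0.

Definition upper_unitriangular (n : nat) (P : 'M['F_2]_n) : Prop :=
  (forall i j : 'I_n, (j < i)%N -> P i j = 0) /\ (forall i : 'I_n, P i i = 1).

From mathcomp Require Import all_boot all_order all_algebra all_fingroup.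
From mathcomp Require Import zify.
Set Implicit Arguments. Unset Strict Implicit. Unset Printing Implicit Defensive.
Import GRing.Theory.
Local Open Scope ring_scope.

(* Over F_2 the kernel F = [[1,0],[1,1]] is an involution and Q_2 F Q_2 = F^T.
   Both properties pass to the Kronecker power G_N, since reversing an index
   complements all of its binary digits: G_N^2 = 1 and Q_pi G_N Q_pi = G_N^T.
   Hence M = P G_N and W = (P^t)^-1 G_N^T satisfy M W^t = P G_N G_N P^-1 = 1,
   i.e. their rows are dual bases, and for dual bases the vectors orthogonal
   to the rows of M indexed by A are the span of the rows of W indexed by the
   complement of A. *)

Lemma binary_digits_inj m (a b : nat) : (a < 2 ^ m)%N -> (b < 2 ^ m)%N ->
  (forall k, (k < m)%N -> odd (a %/ 2 ^ k) = odd (b %/ 2 ^ k)) -> a = b.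
Proof.
elim: m a b => [|m IHm] a b ltam ltbm eq_ab.
  by move: ltam ltbm; rewrite expn0 !ltnS !leqn0 => /eqP-> /eqP->.
rewrite -(odd_double_half a) -(odd_double_half b) -!divn2.
have := eq_ab 0%N isT; rewrite expn0 !divn1 => ->.
congr (_ + _.*2)%N; apply: IHm; rewrite ?ltn_divLR -?expnSr //.
by move=> k ltkm; rewrite -!divnMA -expnS; apply: eq_ab.
Qed.

(* Below the k-th digit, 2^m - 1 - i has digits complementary to those of i,
   and above it a multiple of 2^k; no borrow occurs. *)
Lemma odd_div_exp2_rev m k i : (k < m)%N -> (i < 2 ^ m)%N ->
  odd ((2 ^ m - i.+1) %/ 2 ^ k) = ~~ odd (i %/ 2 ^ k).
Proof.
move=> ltkm ltim.
have X_gt0 : (0 < 2 ^ k)%N := expn_gt0 _ _.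
have split_m : (2 ^ m = 2 ^ (m - k) * 2 ^ k)%N by rewrite -expnD subnK // ltnW.
have Y_even : odd (2 ^ (m - k)) = false by rewrite oddX subn_eq0 leqNgt ltkm.
have def_i := divn_eq i (2 ^ k); have lt_r := ltn_pmod i X_gt0.
move: def_i lt_r Y_even ltim; rewrite split_m.
set q := (i %/ 2 ^ k)%N; set r := (i %% 2 ^ k)%N.
set X := (2 ^ k)%N; set Y := (2 ^ (m - k))%N => def_i lt_r Y_even ltim.
have lt_qY : (q < Y)%N by nia.
have -> : (Y * X - i.+1 = (Y - q.+1) * X + (X - r.+1))%N.
  by rewrite def_i; have := subnK lt_qY; nia.
rewrite divnMDl // divn_small ?addn0; last by lia.
by rewrite oddB // Y_even.
Qed.

Lemma bitE k i : bit k i = odd (i %/ 2 ^ k) :> nat.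
Proof. by rewrite /bit inordK // ltnS leq_b1. Qed.

Lemma bit_eq k i j :
  (bit k i == bit k j) = (odd (i %/ 2 ^ k) == odd (j %/ 2 ^ k)).
Proof. by rewrite -val_eqE /= !bitE; do 2!case: odd. Qed.

Lemma bit_rev_ord m (k : 'I_m) (i : 'I_(2 ^ m)) :
  bit k (rev_ord i) = rev_ord (bit k i).
Proof. by apply: val_inj; rewrite /= !bitE odd_div_exp2_rev //; case: odd. Qed.

Definition digits m (i : 'I_(2 ^ m)) : {ffun 'I_m -> 'I_2} :=
  [ffun k : 'I_m => bit k i].

Lemma digits_inj m : injective (@digits m).
Proof.
move=> i j /ffunP eq_ij; apply/val_inj/(@binary_digits_inj m).
- exact: ltn_ord.
- exact: ltn_ord.
move=> k ltkm.
by apply/eqP; have := eq_ij (Ordinal ltkm); rewrite !ffunE -bit_eq => ->.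
Qed.

Lemma digits_bij m : bijective (@digits m).
Proof.
by apply: inj_card_bij (@digits_inj m) _; rewrite card_ffun !card_ord.
Qed.

Section KroneckerPower.

Variable R : comPzRingType.

Definition kron_pow m (K : 'M[R]_2) : 'M[R]_(2 ^ m) :=
  \matrix_(i, j) \prod_(k < m) K (bit k i) (bit k j).

Lemma tr_kron_pow m K : (kron_pow m K)^T = kron_pow m K^T.
Proof.
by apply/matrixP => i j; rewrite !mxE; apply: eq_bigr => k _; rewrite mxE.
Qed.

(* Summing over l in 'I_(2^m) is summing over its digit vectors, so the sum of
   products factors digitwise. *)
Lemma kron_pow_mul m K L : kron_pow m K *m kron_pow m L = kron_pow m (K *m L).
Proof.
apply/matrixP => i j; rewrite !mxE.
have [undigits digitsK undigitsK] := digits_bij m.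
have bit_undigits d (k : 'I_m) : bit k (undigits d) = d k.
  by rewrite -[in RHS](undigitsK d) ffunE.
rewrite (reindex undigits) /=; last by apply: onW_bij; exists (@digits m).
under eq_bigr => d _ do rewrite !mxE -big_split /=.
under eq_bigr => d _ do under eq_bigr => k _ do rewrite bit_undigits.
pose F (k : 'I_m) (b : 'I_2) := K (bit k i) b * L b (bit k j).
rewrite -(bigA_distr_bigA F) /=.
by apply: eq_bigr => k _; rewrite mxE.
Qed.

Lemma kron_pow1 m : kron_pow m 1%:M = 1%:M.
Proof.
apply/matrixP => i j; rewrite !mxE.
have [<-|neq_ij] := eqVneq i j.
  by rewrite big1 // => k _; rewrite mxE eqxx.
have [k neq_bit] : exists k : 'I_m, bit k i != bit k j.
  apply/existsP; apply: contraR neq_ij; rewrite negb_exists => /forallP eq_bits.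
  by apply/eqP/digits_inj/ffunP => k; rewrite !ffunE; apply/eqP/negPn.
by rewrite (bigD1 k) //= mxE (negbTE neq_bit) mul0r.
Qed.

End KroneckerPower.

Lemma Qpi_conjE n (B : 'M['F_2]_n) i j :
  (Qpi n *m B *m Qpi n) i j = B (rev_ord i) (rev_ord j).
Proof.
set s := perm (@rev_ord_inj n).
have sK : (s^-1 = s)%g.
  by apply/permP => k; apply: (@perm_inj _ s); rewrite permKV !permE rev_ordK.
by rewrite /Qpi -/s -row_permE -[s in perm_mx s]sK -col_permE !mxE !permE.
Qed.

Lemma Qpi_conj_kron_pow m (K : 'M['F_2]_2) :
  Qpi (2 ^ m) *m kron_pow m K *m Qpi (2 ^ m) = kron_pow m (Qpi 2 *m K *m Qpi 2).
Proof.
apply/matrixP => i j; rewrite Qpi_conjE !mxE.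
by apply: eq_bigr => k _; rewrite Qpi_conjE !bit_rev_ord.
Qed.

(* Over F_2, [[1,0],[1,1]]^2 = [[1,0],[2,1]] = 1. *)
Lemma polar_kernel_involutive : polar_kernel *m polar_kernel = 1%:M.
Proof.
apply/matrixP => a b; rewrite !mxE !big_ord_recr big_ord0 !mxE.
by case: a => [[|[|]]] //; case: b => [[|[|]]] //= *; apply/val_inj.
Qed.

Lemma Qpi_conj_polar_kernel : Qpi 2 *m polar_kernel *m Qpi 2 = polar_kernel^T.
Proof.
apply/matrixP => a b; rewrite Qpi_conjE !mxE.
by case: a => [[|[|]]] //; case: b => [[|[|]]].
Qed.

Lemma GN_kron_pow m : GN m = kron_pow m polar_kernel.
Proof. by []. Qed.

Lemma GN_involutive m : GN m *m GN m = 1%:M.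
Proof.
by rewrite GN_kron_pow kron_pow_mul polar_kernel_involutive kron_pow1.
Qed.

Lemma Qpi_conj_GN m : Qpi (2 ^ m) *m GN m *m Qpi (2 ^ m) = (GN m)^T.
Proof.
by rewrite GN_kron_pow Qpi_conj_kron_pow Qpi_conj_polar_kernel tr_kron_pow.
Qed.

Definition indicator_mx n (S : {set 'I_n}) : 'M['F_2]_n :=
  diag_mx (\row_i (i \in S)%:R).

Lemma code_genE n (B : 'M['F_2]_n) S : code_gen B S = indicator_mx S *m B.
Proof.
apply/matrixP => i j; rewrite mul_diag_mx !mxE.
by case: (i \in S); rewrite ?mul1r ?mul0r.
Qed.

Lemma in_dual_codeP n (B : 'M['F_2]_n) S v :
  in_dual_code B S v <-> forall s, s \in S -> (B *m v^T) s 0 = 0.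
Proof.
split=> [orth s sS | orth c /submxP [x ->]].
  have row_code : row s (code_gen B S) = row s B.
    by apply/rowP => j; rewrite !mxE sS.
  by have := orth _ (row_sub s (code_gen B S)); rewrite row_code -row_mul mxE.
have gen_orth : code_gen B S *m v^T = 0.
  apply/matrixP => s a; rewrite (ord1 a) code_genE -mulmxA mul_diag_mx.
  rewrite mxE [in RHS]mxE.
  case: (boolP (s \in S)) => [/orth-> | notS]; first by rewrite mulr0.
  by rewrite mxE (negbTE notS) mul0r.
by rewrite -mulmxA gen_orth mulmx0 mxE.
Qed.

(* If W^T is the inverse of M, a vector is orthogonal to the rows of M indexed
   by S iff its coordinates x = v M^T in the basis W vanish on S. *)
Lemma dual_code_complement n (M W : 'M['F_2]_n) S v : M *m W^T = 1%:M ->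
  in_dual_code M S v <-> in_code W (~: S) v.
Proof.
move=> MWt1; have MtW1 : M^T *m W = 1%:M.
  by rewrite -[W]trmxK -trmx_mul (mulmx1C MWt1) trmx1.
pose x := v *m M^T.
have coordE s : (M *m v^T) s 0 = x 0 s by rewrite -[M]trmxK -trmx_mul mxE.
have v_coord : v = x *m W by rewrite -mulmxA MtW1 mulmx1.
rewrite in_dual_codeP /in_code code_genE; split=> [orth | /submxP [y ->] s sS].
  have x_supp : x = x *m indicator_mx (~: S).
    apply/rowP => s; rewrite mul_mx_diag mxE [X in _ * X]mxE in_setC.
    case: (boolP (s \in S)) => [sS | _]; last by rewrite mulr1.
    by rewrite -coordE orth ?mul0r.
  by rewrite v_coord x_supp -mulmxA submxMl.
rewrite !trmx_mul tr_diag_mx !mulmxA MWt1 mul1mx mul_diag_mx.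
by rewrite !mxE in_setC sS mul0r.
Qed.

Lemma upper_unitriangular_unitmx n (P : 'M['F_2]_n) :
  upper_unitriangular P -> P \in unitmx.
Proof.
case=> P_upper P_diag; rewrite unitmxE -det_tr det_trig.
  by rewrite big1 ?unitr1 // => i _; rewrite mxE P_diag.
apply/forallP => i; apply/forallP => j; apply/implyP => ltij.
by rewrite mxE P_upper.
Qed.

Theorem corollary2 (m : nat) (hm : (1 <= m)%N) (A : {set 'I_(2 ^ m)})
    (P : 'M['F_2]_(2 ^ m)) (hP : upper_unitriangular P) :
  forall v : 'rV['F_2]_(2 ^ m),
    in_dual_code (P *m GN m) A v <->
    in_code (invmx P^T *m Qpi (2 ^ m) *m GN m *m Qpi (2 ^ m)) (~: A) v.
Proof.
move=> v; apply: dual_code_complement.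
have -> : invmx P^T *m Qpi _ *m GN m *m Qpi _ = invmx P^T *m (GN m)^T.
  by rewrite -Qpi_conj_GN !mulmxA.
rewrite trmx_mul trmx_inv !trmxK mulmxA -(mulmxA P) GN_involutive mulmx1.
exact/mulmxV/upper_unitriangular_unitmx.
Qed.
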